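(* If $D$ is an algebraic curve in $\mathbb{CP}^2$ of degree $d$, then for every $n\ge0$ the pullback $(R^n)^*D$ is a divisor of degree $d\cdot4^n$.
   Context: $R[U:V:W]=[(U^2+V^2)^2:V^2(U+W)^2:(V^2+W^2)^2]$ on $\mathbb{CP}^2$. For a rational map $S$ of $\mathbb{CP}^2$ with reduced homogeneous polynomial lift $\hat S$ (components without common factor) and a curve $D=\{p=0\}$ given by a homogeneous polynomial $p$, the pullback $S^*D$ is the divisor $\{p\circ\hat S=0\}$ counted with multiplicities; here $S=R^n$. *)

From HB Require Import structures.
From mathcomp Require Import all_boot all_order all_algebra.
From mathcomp Require Import mpoly.
From mathcomp Require Import complex.
Set Implicit Arguments. Unset Strict Implicit. Unset Printing Implicit Defensive.
Import Order.TTheory GRing.Theory Num.Theory.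
Local Open Scope ring_scope.

Section Defs.
Variable K : fieldType.

Definition cU : {mpoly K[3]} := 'X_(0 : 'I_3).
Definition cV : {mpoly K[3]} := 'X_(1 : 'I_3).
Definition cW : {mpoly K[3]} := 'X_(2 : 'I_3).

Definition Rhat : 3.-tuple {mpoly K[3]} :=
  [tuple (cU ^+ 2 + cV ^+ 2) ^+ 2; cV ^+ 2 * (cU + cW) ^+ 2; (cV ^+ 2 + cW ^+ 2) ^+ 2].

Definition idlift : 3.-tuple {mpoly K[3]} := [tuple cU; cV; cW].

(* composition of lifts: components of F o G are F_i(G_0,G_1,G_2) *)
Definition comp_lift (F G : 3.-tuple {mpoly K[3]}) : 3.-tuple {mpoly K[3]} :=
  [tuple of map (fun q => comp_mpoly G q) F].

(* the naive (not necessarily reduced) polynomial lift of R^n : R^ o ... o R^ *)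
Definition Rhat_iter (n : nat) : 3.-tuple {mpoly K[3]} :=
  iter n (comp_lift Rhat) idlift.

(* S is a homogeneous polynomial lift of the rational map represented by T:
   components homogeneous of a common degree, not all zero, and S and T
   define the same rational map (proportional triples). *)
Definition is_lift_of (T S : 3.-tuple {mpoly K[3]}) : Prop :=
  (exists e : nat, forall i : 'I_3, tnth S i \is e.-homog) /\
  (exists i : 'I_3, tnth S i != 0) /\
  (forall i j : 'I_3, tnth S i * tnth T j = tnth S j * tnth T i).

Definition no_common_factor (S : 3.-tuple {mpoly K[3]}) : Prop :=
  forall g : {mpoly K[3]},
    (forall i : 'I_3, exists q : {mpoly K[3]}, tnth S i = g * q) ->
    (msize g <= 1)%N.

Definition reduced_lift_Rn (n : nat) (S : 3.-tuple {mpoly K[3]}) : Prop :=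
  is_lift_of (Rhat_iter n) S /\ no_common_factor S.

(* the divisor {f = 0} (counted with multiplicities) of a nonzero homogeneous
   polynomial f has degree deg f = (msize f).-1; we record the divisor as the
   nonzero polynomial f and its degree as the total degree. *)
Definition divisor_degree (f : {mpoly K[3]}) : nat := (msize f).-1.

End Defs.

From HB Require Import structures.
From mathcomp Require Import all_boot all_order all_algebra.
From mathcomp Require Import mpoly.
From mathcomp Require Import complex.
Set Implicit Arguments. Unset Strict Implicit. Unset Printing Implicit Defensive.
Import Order.TTheory GRing.Theory Num.Theory.
Local Open Scope ring_scope.

(* With N = 4^n, the naive lift F_n = Rhat_iter n of R^n restricts on the line
   V = 0 to (U^N, 0, W^N).  Comparing with this restriction shows that any
   triple proportional to F_n is a polynomial multiple l * F_n (subtract the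
   part visible on V = 0, divide by V and induct on the size), so a reduced
   lift is c * F_n with c a nonzero constant.  It also shows p o F_n <> 0 for
   p <> 0: divide p by V as long as possible, after which the coefficients of
   p(U,0,W) reappear in p(U^N,0,W^N).  Hence p o S = c^d (p o F_n) is nonzero
   and homogeneous of degree d * 4^n. *)

Section SubstituteZero.
Context {K : idomainType} {k : nat}.
Implicit Types (p q r s t w : {mpoly K[k]}) (i j : 'I_k).

Lemma mpolyX_neq0 i : ('X_i : {mpoly K[k]}) != 0.
Proof. by rewrite -msize_poly_eq0 msizeX mdeg1. Qed.

Lemma msize_mulX i q : q != 0 -> msize ('X_i * q) = (msize q).+1.
Proof. by move=> q0; rewrite msizeM ?mpolyX_neq0 // msizeX mdeg1. Qed.

Lemma msize_mulXn r i N : r != 0 -> msize (r * 'X_i ^+ N) = (msize r + N)%N.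
Proof.
move=> r0; rewrite msizeM ?expf_neq0 ?mpolyX_neq0 //.
by rewrite mpolyXn msizeX mdegMn mdeg1 mul1n addnS.
Qed.

Lemma msize_dhomog_le d p : p \is d.-homog -> (msize p <= d.+1)%N.
Proof.
move/dhomog_mf => hp; rewrite msizeE; apply/bigmax_leqP_seq => m mp _.
by rewrite ltnS hp.
Qed.

Lemma msize_mul_dhomog_le r q i N : q \is N.-homog ->
  (msize (r * q) <= msize (r * 'X_i ^+ N))%N.
Proof.
move=> hq; have [->|r0] := eqVneq r 0; first by rewrite !mul0r msize0.
have [->|q0] := eqVneq q 0; first by rewrite mulr0 msize0.
rewrite msizeM // msize_mulXn // -subn1 leq_subLR add1n -addnS leq_add2l.
exact: msize_dhomog_le hq.
Qed.

Definition zeroX_powX i (N : nat) : k.-tuple {mpoly K[k]} :=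
  [tuple if j == i then 0 else 'X_j ^+ N | j < k].

Definition evalX0 i : {mpoly K[k]} -> {mpoly K[k]} := comp_mpoly (zeroX_powX i 1).
HB.instance Definition _ i :=
  GRing.RMorphism.copy (evalX0 i) (comp_mpoly (zeroX_powX i 1)).

Lemma comp_zeroX_powX_X i N m :
  'X_[m] \mPo zeroX_powX i N = if m i == 0%N then 'X_[(m *+ N)%MM] else 0.
Proof.
rewrite comp_mpolyX mpolyXE_id (bigD1 i) //= tnth_mktuple eqxx expr0n.
case: eqP => [mi0|/eqP ne]; last by rewrite mul0r.
rewrite mul1r [in RHS](bigD1 i) //= mulmnE mi0 mul0n expr0 mul1r.
by apply: eq_bigr => j /negbTE nij; rewrite tnth_mktuple nij mulmnE -exprM mulnC.
Qed.

Lemma mcoeff_comp_zeroX_powX i N p m : (0 < N)%N ->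
  (p \mPo zeroX_powX i N)@_(m *+ N)%MM = if m i == 0%N then p@_m else 0.
Proof.
move=> N_gt0; have mulmnK m' : ((m' *+ N)%MM == (m *+ N)%MM) = (m' == m).
  apply/eqP/eqP => [/mnmP e|->//]; apply/mnmP => j.
  by have /eqP := e j; rewrite !mulmnE eqn_pmul2r // => /eqP.
rewrite comp_mpolyEX raddf_sum /=.
under eq_bigr => m' _ do rewrite mcoeffZ comp_zeroX_powX_X
  (fun_if (mcoeff _)) mcoeffX mcoeff0 mulmnK.
case: (m i =P 0%N) => [mi0|/eqP mi0].
- rewrite [in RHS](mpolyE p) raddf_sum; apply: eq_bigr => m' _ /=.
  rewrite mcoeffZ mcoeffX; have [->|/negbTE ne] := eqVneq m' m; first by rewrite mi0.
  by rewrite if_same.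
- apply: big1 => m' _; have [->|/negbTE ne] := eqVneq m' m.
    by rewrite (negbTE mi0) mulr0.
  by rewrite if_same mulr0.
Qed.

Lemma mcoeff_evalX0 i p m : (evalX0 i p)@_m = if m i == 0%N then p@_m else 0.
Proof. by rewrite -{1}(mulm1n m) mcoeff_comp_zeroX_powX. Qed.

Lemma evalX0_X i j : evalX0 i 'X_j = if j == i then 0 else 'X_j.
Proof. by rewrite /evalX0 comp_zeroX_powX_X mnm1E mulm1n; case: (j =P i). Qed.

Lemma evalX0_id i p : evalX0 i (evalX0 i p) = evalX0 i p.
Proof. by apply/mpolyP => m; rewrite !mcoeff_evalX0; case: eqP. Qed.

Lemma msize_evalX0_le i p : (msize (evalX0 i p) <= msize p)%N.
Proof.
rewrite [X in (X <= _)%N]msizeE; apply/bigmax_leqP_seq => m mp _.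
apply: msize_mdeg_lt; move: mp; rewrite !mcoeff_msupp mcoeff_evalX0.
by case: (m i == 0%N); rewrite ?eqxx.
Qed.

Definition quoX i p : {mpoly K[k]} :=
  \sum_(m <- msupp p) (if m i == 0%N then 0 else p@_m) *: 'X_[(m - U_(i))%MM].

Lemma evalX0_quoX i p : p = evalX0 i p + 'X_i * quoX i p.
Proof.
rewrite {1 2}[p]mpolyE /evalX0 /quoX raddf_sum mulr_sumr -big_split /=.
apply: eq_bigr => m _; rewrite linearZ /= comp_zeroX_powX_X mulm1n.
rewrite -scalerAr -mpolyXD; case: eqP => [_|/eqP mi]; first by rewrite scale0r addr0.
by rewrite scaler0 add0r addmC submK // lep1mP.
Qed.

Lemma evalX0_eq0 i p : evalX0 i p = 0 -> p = 'X_i * quoX i p.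
Proof. by move=> p0; rewrite {1}(evalX0_quoX i p) p0 add0r. Qed.

Lemma powX_dvd_mul_free i w t s N : w != 0 -> evalX0 i w = w ->
  t * w = s * 'X_i ^+ N -> exists r, t = 'X_i ^+ N * r.
Proof.
move=> w0 wfree; elim: N t s => [|N IH] t s e; first by exists t; rewrite mul1r.
have /evalX0_eq0 tX : evalX0 i t = 0.
  have : evalX0 i (t * w) = 0 by rewrite e rmorphM rmorphXn /= evalX0_X eqxx expr0n mulr0.
  by rewrite rmorphM /= wfree => /eqP; rewrite mulf_eq0 (negbTE w0) orbF => /eqP.
have /(mulIf (mpolyX_neq0 i)) /IH [r qr] : quoX i t * w * 'X_i = s * 'X_i ^+ N * 'X_i.
  by rewrite -mulrA [w * _]mulrC mulrA [_ * 'X_i]mulrC -tX e -mulrA -exprSr.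
by exists r; rewrite tX qr mulrA exprS.
Qed.

End SubstituteZero.

Section Composition.
Context {R : comNzRingType} {n k : nat}.
Implicit Types (p : {mpoly R[n]}) (lq : n.-tuple {mpoly R[k]}).

Lemma comp_mpolyX_tnth (j : 'I_n) lq : 'X_j \mPo lq = tnth lq j.
Proof. by rewrite comp_mpolyXU -tnth_nth. Qed.

Lemma comp_mpolyA l p lq (lr : k.-tuple {mpoly R[l]}) :
  (p \mPo lq) \mPo lr = p \mPo [tuple tnth lq j \mPo lr | j < n].
Proof.
rewrite (comp_mpolyEX p lq) (comp_mpolyEX p [tuple _ | j < n]) raddf_sum.
apply: eq_bigr => m _; rewrite /= comp_mpolyZ !comp_mpolyX rmorph_prod; congr (_ *: _).
by apply: eq_bigr => j _; rewrite rmorphXn tnth_mktuple.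
Qed.

Lemma comp_mpoly_dhomog d N p lq : p \is d.-homog ->
  (forall j, tnth lq j \is N.-homog) -> p \mPo lq \is (d * N).-homog.
Proof.
move=> hp hlq; rewrite comp_mpolyEX big_seq; apply: rpred_sum => m mp; apply: rpredZ.
rewrite comp_mpolyX -(dhomog_mf hp mp) /= mdegE mulnC big_distrr.
apply: (big_rec2 (fun e q => q \is e.-homog)) => [|j e q _ hq]; first exact: dhomog1.
exact: dhomogM (dhomogMn _ (hlq j)) hq.
Qed.

Lemma comp_mpoly_dhomog_scale d p lq lq' c : p \is d.-homog ->
  (forall j, tnth lq' j = c%:MP * tnth lq j) -> p \mPo lq' = c ^+ d *: (p \mPo lq).
Proof.
move=> hp hlq; rewrite !comp_mpolyEX scaler_sumr !big_seq; apply: eq_bigr => m mp.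
rewrite !comp_mpolyX scalerA mulrC -scalerA; congr (_ *: _).
under eq_bigr => j _ do rewrite hlq exprMn.
by rewrite big_split /= prodrXr -mdegE (dhomog_mf hp mp) -rmorphXn mul_mpolyC.
Qed.

End Composition.

Lemma ord3P (j : 'I_3) : [\/ j = 0, j = 1 | j = 2].
Proof.
by case: j => [[|[|[|//]]] ?]; [constructor 1|constructor 2|constructor 3]; apply: val_inj.
Qed.

Section RhatIterates.
Context {K : fieldType}.
Local Notation P := {mpoly K[3]}.
Local Notation F n := (Rhat_iter K n).
Local Notation i0 := (0 : 'I_3).
Local Notation i1 := (1 : 'I_3).
Local Notation i2 := (2 : 'I_3).

Lemma Rhat_iter0 j : tnth (F 0) j = 'X_j.
Proof. by case: (ord3P j) => ->. Qed.

Lemma Rhat_iterSU n :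
  tnth (F n.+1) i0 = (tnth (F n) i0 ^+ 2 + tnth (F n) i1 ^+ 2) ^+ 2.
Proof. by rewrite tnth_map /= rmorphXn rmorphD !rmorphXn /= !comp_mpolyX_tnth. Qed.

Lemma Rhat_iterSV n :
  tnth (F n.+1) i1 = tnth (F n) i1 ^+ 2 * (tnth (F n) i0 + tnth (F n) i2) ^+ 2.
Proof. by rewrite tnth_map /= rmorphM !rmorphXn rmorphD /= !comp_mpolyX_tnth. Qed.

Lemma Rhat_iterSW n :
  tnth (F n.+1) i2 = (tnth (F n) i1 ^+ 2 + tnth (F n) i2 ^+ 2) ^+ 2.
Proof. by rewrite tnth_map /= rmorphXn rmorphD !rmorphXn /= !comp_mpolyX_tnth. Qed.

Lemma dhomog_Rhat_iter n j : tnth (F n) j \is (4 ^ n).-homog.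
Proof.
elim: n j => [|n IH] j; first by rewrite Rhat_iter0 expn0 dhomogX /= mdeg1.
case: (ord3P j) => ->.
- rewrite Rhat_iterSU expnSr -[4%N]/(2 * 2)%N mulnA.
  by apply/dhomogMn/dhomogD; apply/dhomogMn/IH.
- rewrite Rhat_iterSV expnSr -[4%N]/(2 + 2)%N mulnDr.
  by apply/dhomogM; apply/dhomogMn; rewrite ?dhomogD ?IH.
- rewrite Rhat_iterSW expnSr -[4%N]/(2 * 2)%N mulnA.
  by apply/dhomogMn/dhomogD; apply/dhomogMn/IH.
Qed.

Lemma evalX1_Rhat_iter n j :
  evalX0 i1 (tnth (F n) j) = if j == i1 then 0 else 'X_j ^+ (4 ^ n)%N.
Proof.
elim: n j => [|n IH] j; first by rewrite Rhat_iter0 evalX0_X expn0 expr1.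
have e0 := IH i0; have e1 := IH i1; have e2 := IH i2; rewrite /= in e0 e1 e2.
case: (ord3P j) => ->; rewrite /= ?Rhat_iterSU ?Rhat_iterSV ?Rhat_iterSW.
- by rewrite !rmorphXn rmorphD !rmorphXn /= e0 e1 expr0n addr0 -!exprM expnSr.
- by rewrite rmorphM !rmorphXn /= e1 expr0n mul0r.
- by rewrite !rmorphXn rmorphD !rmorphXn /= e1 e2 expr0n add0r -!exprM expnSr.
Qed.

Lemma evalX1_Rhat_iter_tuple n :
  [tuple evalX0 i1 (tnth (F n) j) | j < 3] = zeroX_powX i1 (4 ^ n)%N.
Proof. by apply: eq_from_tnth => j; rewrite !tnth_mktuple evalX1_Rhat_iter. Qed.

Lemma Rhat_iterV_neq0 n : tnth (F n) i1 != 0.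
Proof.
elim: n => [|n IH]; first by rewrite Rhat_iter0 mpolyX_neq0.
rewrite Rhat_iterSV mulf_neq0 ?expf_neq0 //.
have : evalX0 i0 (evalX0 i1 (tnth (F n) i0 + tnth (F n) i2)) = 'X_i2 ^+ (4 ^ n)%N.
  by rewrite !rmorphD /= !evalX1_Rhat_iter /= !rmorphXn /= !evalX0_X /= expr0n expn_eq0 add0r.
by apply: contra_eq_neq => ->; rewrite !rmorph0 eq_sym expf_neq0 ?mpolyX_neq0.
Qed.

Definition proportional (f g : 'I_3 -> P) := forall i j, f i * g j = f j * g i.

Lemma evalX1_proportional n (T : 'I_3 -> P) : proportional T (tnth (F n)) ->
  exists2 r, evalX0 i1 r = r & forall j, evalX0 i1 (T j) = r * evalX0 i1 (tnth (F n) j).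
Proof.
move=> hT; set N := (4 ^ n)%N.
have XN_neq0 j : ('X_j : P) ^+ N != 0 by rewrite expf_neq0 ?mpolyX_neq0.
have e02 : evalX0 i1 (T i0) * 'X_i2 ^+ N = evalX0 i1 (T i2) * 'X_i0 ^+ N.
  by have := congr1 (evalX0 i1) (hT i0 i2); rewrite !rmorphM /= !evalX1_Rhat_iter.
have X2_free : evalX0 i0 ('X_i2 ^+ N : P) = 'X_i2 ^+ N by rewrite rmorphXn /= evalX0_X.
have [r t0] := powX_dvd_mul_free (XN_neq0 i2) X2_free e02.
exists r => [|j].
  apply: (mulfI (XN_neq0 i0)); rewrite -t0 -[in RHS]evalX0_id t0.
  by rewrite rmorphM /= rmorphXn /= evalX0_X.
rewrite evalX1_Rhat_iter; case: (ord3P j) => -> /=.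
- by rewrite t0 mulrC.
- have := congr1 (evalX0 i1) (hT i1 i0); rewrite !rmorphM /= !evalX1_Rhat_iter /=.
  by rewrite !mulr0 => /eqP; rewrite mulf_eq0 (negbTE (XN_neq0 i0)) orbF => /eqP.
- by apply: (mulIf (XN_neq0 i0)); rewrite -e02 t0 -mulrA mulrC.
Qed.

Lemma proportional_Rhat_iter n (T : 'I_3 -> P) : proportional T (tnth (F n)) ->
  exists l, forall j, T j = l * tnth (F n) j.
Proof.
have [M] : exists M, forall j, (msize (T j) <= M)%N.
  by exists (\max_j msize (T j)) => j; apply: leq_bigmax.
elim: M T => [|M IH] T hM hT.
  by exists 0 => j; apply/eqP; rewrite mul0r -msize_poly_eq0 -leqn0.
have [r r_free eT] := evalX1_proportional hT.
have t0 : evalX0 i1 (T i0) = r * 'X_i0 ^+ (4 ^ n)%N by rewrite eT evalX1_Rhat_iter.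
pose D j := T j - r * tnth (F n) j.
have DX j : D j = 'X_i1 * quoX i1 (D j).
  by apply: evalX0_eq0; rewrite rmorphB rmorphM /= r_free eT subrr.
have msizeD j : (msize (D j) <= M.+1)%N.
  rewrite (leq_trans (msizeD_le _ _)) // geq_max hM msizeN.
  rewrite (leq_trans (msize_mul_dhomog_le r i0 (dhomog_Rhat_iter n j))) //.
  by rewrite -t0 (leq_trans (msize_evalX0_le _ _)).
have [l hl] : exists l, forall j, quoX i1 (D j) = l * tnth (F n) j.
  apply: IH => [j|i j].
    have [->|q0] := eqVneq (quoX i1 (D j)) 0; first by rewrite msize0.
    by have := msizeD j; rewrite {1}DX msize_mulX.
  apply: (mulfI (mpolyX_neq0 i1)); rewrite !mulrA -!DX /D !mulrBl hT.
  by rewrite mulrAC.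
exists (r + 'X_i1 * l) => j.
by have := DX j; rewrite hl /D => /eqP; rewrite subr_eq => /eqP ->; rewrite mulrA addrC mulrDl.
Qed.

Lemma comp_Rhat_iter_neq0 n (p : P) : p != 0 -> p \mPo F n != 0.
Proof.
have [k] := ubnP (msize p); elim: k p => // k IH p /ltnSE size_p p0.
have [/evalX0_eq0 pX|] := eqVneq (evalX0 i1 p) 0.
  set q := quoX i1 p in pX.
  have q0 : q != 0 by apply: contraNneq p0 => q0; rewrite pX q0 mulr0.
  rewrite pX rmorphM /= comp_mpolyX_tnth mulf_neq0 ?Rhat_iterV_neq0 // IH //.
  by move: size_p; rewrite pX msize_mulX.
rewrite -mleadc_eq0 mcoeff_evalX0; set m := mlead _.
case: (m i1 =P 0%N) => [mi0 pm0|]; last by rewrite eqxx.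
apply: contra_neq pm0 => /(congr1 (fun q => (evalX0 i1 q)@_(m *+ (4 ^ n)%N)%MM)) /=.
rewrite {1}/evalX0 comp_mpolyA evalX1_Rhat_iter_tuple mcoeff_comp_zeroX_powX ?expn_gt0 // mi0.
by rewrite mcoeff_evalX0 mulmnE mi0 mcoeff0.
Qed.

End RhatIterates.

Theorem corollary4p5 (R : rcfType) (d : nat) (p : {mpoly R[i][3]}) :
  (0 < d)%N -> p != 0 -> p \is d.-homog ->
  forall (n : nat) (S : 3.-tuple {mpoly R[i][3]}),
    reduced_lift_Rn n S ->
    comp_mpoly S p != 0 /\ divisor_degree (comp_mpoly S p) = (d * 4 ^ n)%N.
Proof.
move=> _ p0 hp n S [[_ [[j Sj] SF]] S_coprime].
have [l Sl] := proportional_Rhat_iter SF.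
have /msize1_polyC lC := S_coprime l (fun j => ex_intro _ _ (Sl j)).
set c := l@_0 in lC.
have c0 : c != 0 by apply: contraNneq Sj => c0; rewrite Sl lC c0 mpolyC0 mul0r.
have -> : comp_mpoly S p = c ^+ d *: comp_mpoly (Rhat_iter _ n) p.
  by apply: comp_mpoly_dhomog_scale hp _ => i; rewrite Sl lC.
have pF0 := comp_Rhat_iter_neq0 n p0.
have hpF := comp_mpoly_dhomog hp (dhomog_Rhat_iter n).
split; first by rewrite scaler_eq0 negb_or expf_neq0.
by rewrite /divisor_degree msizeZ ?expf_neq0 // (dhomog_uniq pF0 (dhomog_msize hpF) hpF).
Qed.
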